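(* Let $f:\mathbb{R}^n\to\mathbb{R}^n$ be locally Lipschitz, partitioned into blocks $x=(x_1,\dots,x_N)$, $x_j\in\mathbb{R}^{n_j}$, with $X=\prod_j X_j$ and $X_T=\prod_jX_{j,T}$ compact, and assume the sparsity graph is acyclic with leafs $x_{i_1},\dots,x_{i_l}$. Let $I_r$ index the blocks of $\mathbf{P}(x_{i_r})$, $X_{I_r}=\prod_{j\in I_r}X_j\subset\mathbb{R}^{n_r}$, and for $T\ge0$ let $R_T$ be the ROA of $\dot x=f(x)$. Suppose $v^r\in C^1([0,T]\times\mathbb{R}^{n_r})$, $w^r\in C(X_{I_r})$, $r=1,\dots,l$, satisfy $$\sum_{r=1}^l\mathcal{L}_rv^r(t,x_{I_r})\le0 \text{ on }[0,T]\times X,\quad \sum_{r=1}^lv^r(T,x_{I_r})\ge0\text{ on }X_T,$$ $$\sum_{r=1}^lw^r(x_{I_r})\ge0\text{ on }X,\quad \sum_{r=1}^l\big(w^r(x_{I_r})-v^r(0,x_{I_r})\big)\ge l\text{ on }X.$$ Then $\{x\in X:\sum_{r=1}^lw^r(x_{I_r})\ge l\}\supset R_T$.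
   Context: Sparsity graph: nodes are the blocks; $(x_i,x_j)$ is an edge if $f_j$ depends on $x_i$; the past $\mathbf{P}(x_j)$ is $x_j$ together with all nodes with a directed path to $x_j$; a leaf is a node without successor. $x_{I_r}$ is the subvector of $x$ of blocks in $I_r$, $f_{I_r}$ the corresponding components of $f$ (depending only on $x_{I_r}$), and $\mathcal{L}_rv=\partial_tv+\nabla_{x_{I_r}}v\cdot f_{I_r}$. ROA: $R_T=\{x_0\in X:$ the solution of $\dot x=f(x)$, $x(0)=x_0$ satisfies $x(t)\in X$ on $[0,T]$ and $x(T)\in X_T\}$. *)

From HB Require Import structures.
From mathcomp Require Import all_boot all_order all_algebra.
From mathcomp Require Import all_classical all_reals all_analysis.
Set Implicit Arguments. Unset Strict Implicit. Unset Printing Implicit Defensive.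
Import Order.TTheory GRing.Theory Num.Theory.
Import numFieldNormedType.Exports.
Local Open Scope classical_set_scope.
Local Open Scope ring_scope.

Section Sparse.
Variables (R : realType) (n N : nat).
(* blk k = index of the block containing coordinate k of x in R^n *)
Variable blk : 'I_n -> 'I_N.

Definition coords (I : {set 'I_N}) : {set 'I_n} := [set k | blk k \in I].

Definition projS (S : {set 'I_n}) (x : 'rV[R]_n) : 'rV[R]_#|S| :=
  \row_(k < #|S|) x ord0 (enum_val k).

Definition xblock (j : 'I_N) (x : 'rV[R]_n) := projS (coords [set j]) x.
Definition xsub (I : {set 'I_N}) (x : 'rV[R]_n) := projS (coords I) x.

Variable f : 'rV[R]_n -> 'rV[R]_n.

Definition depends_on (i j : 'I_N) : Prop :=
  exists x y : 'rV[R]_n,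
    (forall k, blk k != i -> x ord0 k = y ord0 k) /\
    xblock j (f x) <> xblock j (f y).

Definition sedge : rel 'I_N := fun i j => (i != j) && `[< depends_on i j >].

Definition sparsity_acyclic : Prop :=
  forall i j, sedge i j -> ~~ connect sedge j i.

Definition is_leaf (j : 'I_N) : bool := [forall k, ~~ sedge j k].
Definition leaves : {set 'I_N} := [set j | is_leaf j].

Definition past (j : 'I_N) : {set 'I_N} := [set i | connect sedge i j].

End Sparse.

Section Sets.
Variables (R : realType) (n N : nat) (blk : 'I_n -> 'I_N).

Definition prodset (Xs : forall j : 'I_N, set 'rV[R]_#|coords blk [set j]|)
  : set 'rV[R]_n := [set x | forall j, Xs j (xblock blk j x)].

Definition prodset_sub (Xs : forall j : 'I_N, set 'rV[R]_#|coords blk [set j]|)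
  (I : {set 'I_N}) : set 'rV[R]_#|coords blk I| :=
  [set y | exists x : 'rV[R]_n, xsub blk I x = y /\
                                 forall j, j \in I -> Xs j (xblock blk j x)].
End Sets.

Section Dyn.
Variables (R : realType) (n : nat).

Definition locally_lipschitz (f : 'rV[R]_n -> 'rV[R]_n) : Prop :=
  forall x, exists r : R, 0 < r /\ exists L : R, forall y z,
    `|x - y| < r -> `|x - z| < r -> `|f y - f z| <= L * `|y - z|.

Definition is_solution (f : 'rV[R]_n -> 'rV[R]_n) (T : R) (phi : R -> 'rV[R]_n)
  : Prop :=
  {within `[0, T], continuous phi} /\
  forall t, 0 < t < T -> is_derive t 1 phi (f (phi t)).

Definition ROA (f : 'rV[R]_n -> 'rV[R]_n) (X XT : set 'rV[R]_n) (T : R)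
  : set 'rV[R]_n :=
  [set x0 | X x0 /\ exists phi : R -> 'rV[R]_n,
     phi 0 = x0 /\ is_solution f T phi /\
     (forall t, 0 <= t <= T -> X (phi t)) /\ XT (phi T)].

Definition C1 (m : nat) (v : R * 'rV[R]_m -> R) : Prop :=
  (forall p, differentiable v p) /\
  (forall h : R * 'rV[R]_m, continuous (fun p => 'd v p h)).

(* L v (t,y) = d_t v + grad_y v . g  (directional derivative along (1, g)) *)
Definition Lie (m : nat) (v : R * 'rV[R]_m -> R) (t : R) (y g : 'rV[R]_m) : R :=
  'd v (t, y) (1, g).
End Dyn.

Arguments prodset {R n N} blk Xs _.
Arguments prodset_sub {R n N} blk Xs I _.
Arguments xsub {R n N} blk I x.
Arguments xblock {R n N} blk j x.
Arguments past {R n N} blk f j.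
Arguments leaves {R n N} blk f.
Arguments sparsity_acyclic {R n N} blk f.

(* Along a trajectory phi of x' = f x that stays in X on [0, T], the sum
   V s = sum_r v^r (s, x_{I_r}(phi s)) has derivative sum_r L_r v^r <= 0, by the
   chain rule and because x_{I_r} is linear.  Hence V 0 >= V T >= 0, and the
   hypothesis sum_r (w^r - v^r(0, .)) >= l at phi 0 gives sum_r w^r >= l. *)

From HB Require Import structures.
From mathcomp Require Import all_boot all_order all_algebra.
From mathcomp Require Import all_classical all_reals all_analysis.
Import Order.TTheory GRing.Theory Num.Theory.
Import numFieldNormedType.Exports.
Local Open Scope classical_set_scope.
Local Open Scope ring_scope.
Set Implicit Arguments.
Unset Strict Implicit.
Unset Printing Implicit Defensive.

Section Calculus.
Variable R : realType.

Lemma is_derive1_diff (V : normedModType R) (g : R -> V) (t : R) (d : V) :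
  is_derive t 1 g d -> is_diff t g ( *:%R^~ d).
Proof.
move=> dg; have dgt : differentiable g t.
  by apply/derivable1_diffP; exact: ex_derive.
by apply: DiffDef => //; rewrite diff1E // derive1E derive_val.
Qed.

Lemma is_diff_derive1 (V : normedModType R) (g dg : R -> V) (t : R) :
  is_diff t g dg -> is_derive t 1 g (dg 1).
Proof.
move=> ?; apply: DeriveDef; first exact: diff_derivable.
by rewrite deriveE // diff_val.
Qed.

Lemma is_derive_Lie m (v : R * 'rV[R]_m -> R) (g : R -> 'rV[R]_m) (t : R) d :
  differentiable v (t, g t) -> is_derive t 1 g d ->
  is_derive t 1 (fun s => v (s, g s)) (Lie v t (g t) d).
Proof.
move=> /differentiableP dv /is_derive1_diff dg.
have := is_diff_derive1 (is_diff_comp (is_diff_pair (is_diff_id t) dg) dv).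
by rewrite /= scale1r.
Qed.

Lemma is_derive_big (V W : normedModType R) (I : Type) (r : seq I)
    (P : pred I) (h : I -> V -> W) (dh : I -> W) (x v : V) :
  (forall i, P i -> is_derive x v (h i) (dh i)) ->
  is_derive x v (fun y => \sum_(i <- r | P i) h i y) (\sum_(i <- r | P i) dh i).
Proof.
move=> dh_i; rewrite -fct_sumE.
elim/big_ind2: _ => //; first exact: is_derive_cst.
by move=> *; exact: is_deriveD.
Qed.

Lemma within_continuous_pair m (D : set R)
    (v : R * 'rV[R]_m -> R) (g : R -> 'rV[R]_m) :
  continuous v -> {within D, continuous g} ->
  {within D, continuous (fun s => v (s, g s))}.
Proof.
move=> v_cont g_cont s.
have id_cont : (id : subspace D -> R) @ nbhs (s : subspace D) --> (s : R).
  by apply: (continuous_subspaceT (f := id)) => x; exact: cvg_id.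
exact: (cvg_comp _ _ (cvg_pair id_cont (g_cont s)) (v_cont (s : R, g s))).
Qed.

End Calculus.

Section Projection.
Variables (R : realType) (n : nat) (S : {set 'I_n}).

Lemma projS_is_linear : linear (@projS R n S).
Proof. by move=> a x y; apply/rowP => k; rewrite !mxE. Qed.

HB.instance Definition _ := GRing.isLinear.Build R 'rV[R]_n 'rV[R]_#|S| *:%R
  (@projS R n S) projS_is_linear.

Lemma projS_continuous : continuous (@projS R n S).
Proof.
move=> x A /nbhs_ballP[e /= e0 eA]; apply/nbhs_ballP; exists e => //= y [_ xy].
by apply: eA; split => // i j; rewrite !mxE; exact: xy.
Qed.

Global Instance is_diff_projS (x : 'rV[R]_n) : is_diff x (projS S) (projS S).
Proof.
by apply: DiffDef; [exact: linear_differentiable projS_continuous|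
                    exact: diff_lin projS_continuous].
Qed.

Lemma is_derive_projS (phi : R -> 'rV[R]_n) (t : R) (d : 'rV[R]_n) :
  is_derive t 1 phi d -> is_derive t 1 (projS S \o phi) (projS S d).
Proof.
move=> /is_derive1_diff dphi.
have := is_diff_derive1 (is_diff_comp dphi (is_diff_projS _)).
by rewrite /= scale1r.
Qed.

End Projection.

Section SumAlongSolution.
Variables (R : realType) (n : nat) (f : 'rV[R]_n -> 'rV[R]_n) (T : R).
Variable phi : R -> 'rV[R]_n.
Variables (I : finType) (A : {set I}) (S : I -> {set 'I_n}).
Variable v : forall i, R * 'rV[R]_#|S i| -> R.
Arguments v : clear implicits.
Hypothesis phi_sol : is_solution f T phi.
Hypothesis v_diff :
  forall i, i \in A -> forall p : R * 'rV[R]_#|S i|, differentiable (v i) p.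

Lemma is_derive_sum_along (t : R) : 0 < t < T ->
  is_derive t 1 (fun s => \sum_(i in A) v i (s, projS (S i) (phi s)))
    (\sum_(i in A) Lie (v i) t (projS (S i) (phi t)) (projS (S i) (f (phi t)))).
Proof.
move=> tT; apply: is_derive_big => i iA.
exact: is_derive_Lie (v_diff iA _) (is_derive_projS _ (phi_sol.2 t tT)).
Qed.

Lemma sum_along_continuous :
  {within `[0, T],
    continuous (fun s => \sum_(i in A) v i (s, projS (S i) (phi s)))}.
Proof.
apply: continuous_big => [|i iA]; first exact: add_continuous.
apply: within_continuous_pair => [p|s].
  exact: differentiable_continuous (v_diff iA p).
by apply: (continuous_comp (phi_sol.1 s)); exact: projS_continuous.
Qed.

Lemma sum_along_le :
  0 <= T ->
  (forall t, 0 < t < T ->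
     \sum_(i in A) Lie (v i) t (projS (S i) (phi t)) (projS (S i) (f (phi t)))
       <= 0) ->
  \sum_(i in A) v i (T, projS (S i) (phi T))
    <= \sum_(i in A) v i (0, projS (S i) (phi 0)).
Proof.
move=> T_ge0 Lie_le0.
have T_in : T \in `[0, T] by rewrite in_itv /= lexx T_ge0.
have O_in : 0 \in `[0, T] by rewrite in_itv /= lexx T_ge0.
pose V s := \sum_(i in A) v i (s, projS (S i) (phi s)).
apply: (@ler0_derive1_le_cc R V 0 T _ _ sum_along_continuous
          T 0 T_in O_in T_ge0).
- by move=> t; rewrite in_itv => /is_derive_sum_along dV; exact: ex_derive.
- move=> t; rewrite in_itv => tT; have dV := is_derive_sum_along tT.
  by rewrite derive1E derive_val; exact: Lie_le0.
Qed.

End SumAlongSolution.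

Theorem proposition3 (R : realType) (n N : nat) (blk : 'I_n -> 'I_N)
  (f : 'rV[R]_n -> 'rV[R]_n)
  (Xs XTs : forall j : 'I_N, set 'rV[R]_#|coords blk [set j]|)
  (T : R)
  (v : forall i : 'I_N, R * 'rV[R]_#|coords blk (past blk f i)| -> R)
  (w : forall i : 'I_N, 'rV[R]_#|coords blk (past blk f i)| -> R) :
  (forall j : 'I_N, exists k : 'I_n, blk k = j) ->
  locally_lipschitz f ->
  compact (prodset blk Xs) ->
  compact (prodset blk XTs) ->
  sparsity_acyclic blk f ->
  0 <= T ->
  (forall i, i \in leaves blk f -> C1 (v i)) ->
  (forall i, i \in leaves blk f ->
     {within prodset_sub blk Xs (past blk f i), continuous (w i)}) ->
  (forall t x, 0 <= t <= T -> prodset blk Xs x ->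
     \sum_(i in leaves blk f)
        Lie (v i) t (xsub blk (past blk f i) x) (xsub blk (past blk f i) (f x))
       <= 0) ->
  (forall x, prodset blk XTs x ->
     0 <= \sum_(i in leaves blk f) v i (T, xsub blk (past blk f i) x)) ->
  (forall x, prodset blk Xs x ->
     0 <= \sum_(i in leaves blk f) w i (xsub blk (past blk f i) x)) ->
  (forall x, prodset blk Xs x ->
     (#|leaves blk f|%:R <=
      \sum_(i in leaves blk f)
        (w i (xsub blk (past blk f i) x) - v i (0, xsub blk (past blk f i) x)))) ->
  ROA f (prodset blk Xs) (prodset blk XTs) T
    `<=` [set x | prodset blk Xs x /\
                  #|leaves blk f|%:R <=
                  \sum_(i in leaves blk f) w i (xsub blk (past blk f i) x)].
Proof.
move=> _ _ _ _ _ T_ge0 v_C1 _ Lie_le0 vT_ge0 _ wv_ge x0.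
move=> [X_x0 [phi [phi0 [phi_sol [phi_X phi_XT]]]]]; subst x0; split => //.
have Lie_along_le0 t : 0 < t < T ->
    \sum_(i in leaves blk f) Lie (v i) t (xsub blk (past blk f i) (phi t))
                                         (xsub blk (past blk f i) (f (phi t)))
      <= 0.
  move=> /andP[/ltW t_ge0 /ltW t_leT]; have tT : 0 <= t <= T by rewrite t_ge0.
  exact: Lie_le0 tT (phi_X t tT).
have v_decr :=
  sum_along_le phi_sol (fun i iL => (v_C1 i iL).1) T_ge0 Lie_along_le0.
apply: (le_trans (wv_ge _ X_x0)); rewrite sumrB lerBlDr lerDl.
exact: (le_trans (vT_ge0 _ phi_XT) v_decr).
Qed.
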